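(* Let $S$ and $S'$ be two TBLS searches with strict partial orders $\prec_S$ and $\prec_{S'}$ on $P_f(\mathbb{N}^+)$. Then the following are equivalent: (i) for every finite graph $G$, every $S'$-ordering of $G$ is also an $S$-ordering of $G$; (ii) for all $A,B\in P_f(\mathbb{N}^+)$, $A\prec_S B$ implies $A\prec_{S'} B$.
   Context: Let $G=(V,E)$ be a finite undirected graph with $n$ vertices; $N(v)$ denotes the set of neighbours of $v$. An ordering of $V$ is a bijection $\sigma:\{1,\dots,n\}\to V$; $\sigma(i)$ is the $i$th vertex. $P_f(\mathbb{N}^+)$ is the set of finite subsets of the positive integers. Given a strict partial order $\prec$ on $P_f(\mathbb{N}^+)$ and an ordering $\tau$ of $V$, the Tie-Breaking Label Search $\mathrm{TBLS}(G,\prec,\tau)$ is the procedure: set $label(v)=\emptyset$ for every $v$; for $i=1,\dots,n$: let Eligible be the set of unnumbered vertices $x$ such that there is no unnumbered vertex $y$ with $label(x)\prec label(y)$; let $v$ be the first vertex of Eligible in the ordering $\tau$; set $\sigma(i)=v$ ($v$ becomes numbered); for every unnumbered neighbour $w$ of $v$ replace $label(w)$ by $label(w)\cup\{i\}$. The output is $\sigma$. A TBLS search $S$ is specified by a strict partial order $\prec_S$ on $P_f(\mathbb{N}^+)$; an ordering $\sigma$ of $V$ is an $S$-ordering of $G$ if $\sigma=\mathrm{TBLS}(G,\prec_S,\tau)$ for some ordering $\tau$ of $V$. *)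

From HB Require Import structures.
From mathcomp Require Import all_boot finmap.
Set Implicit Arguments. Unset Strict Implicit. Unset Printing Implicit Defensive.
Open Scope fset_scope.

Definition pfset := {A : {fset nat} | 0%N \notin A}.

Definition strict_po (prec : rel pfset) : Prop :=
  irreflexive prec /\ transitive prec.

Definition simple_graph (T : finType) (e : rel T) : Prop :=
  symmetric e /\ irreflexive e.

Definition is_ordering (T : finType) (s : seq T) : bool :=
  uniq s && (size s == #|T|).

(* label of x when the vertices of s (s = sigma(1..k)) are numbered:
   { i in 1..k | sigma(i) is a neighbour of x } *)
Definition lab_raw (T : finType) (e : rel T) (s : seq T) (x : T) : {fset nat} :=
  [fset i.+1 | i in [seq i <- iota 0 (size s) | e (nth x s i) x]].

Lemma lab_raw_pos (T : finType) (e : rel T) (s : seq T) (x : T) :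
  0%N \notin lab_raw e s x.
Proof. by apply/imfsetP => -[i _]. Qed.

Definition lab (T : finType) (e : rel T) (s : seq T) (x : T) : pfset :=
  exist _ (lab_raw e s x) (lab_raw_pos e s x).

Definition eligible (T : finType) (prec : rel pfset) (e : rel T) (s : seq T) (x : T) : bool :=
  (x \notin s) && [forall y, (y \notin s) ==> ~~ prec (lab e s x) (lab e s y)].

Definition tbls_next (T : finType) (prec : rel pfset) (e : rel T) (tau s : seq T) : option T :=
  ohead [seq x <- tau | eligible prec e s x].

Fixpoint tbls_iter (T : finType) (prec : rel pfset) (e : rel T) (tau : seq T) (k : nat) (s : seq T) : seq T :=
  if k is k'.+1 then
    if tbls_next prec e tau s is Some v then tbls_iter prec e tau k' (rcons s v) else s
  else s.

Definition TBLS (T : finType) (prec : rel pfset) (e : rel T) (tau : seq T) : seq T :=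
  tbls_iter prec e tau #|T| [::].

Definition S_ordering (T : finType) (prec : rel pfset) (e : rel T) (sigma : seq T) : Prop :=
  exists tau, is_ordering tau /\ sigma = TBLS prec e tau.

(* (ii) -> (i): a vertex ordering is an S-ordering exactly when each vertex is
   S-eligible at the moment it is numbered (TBLS tie-broken by the ordering
   itself then reproduces it), and S'-eligibility implies S-eligibility as soon
   as [precS] is contained in [precS'].
   (i) -> (ii): if [A] precedes [B] for S but not for S', take vertices
   0, ..., n+1 with n bounding A and B, give vertex n the earlier neighbourhood A,
   vertex n+1 the earlier neighbourhood B, and every vertex k < n the earlier
   neighbourhood B if the trace of A on {1, ..., k} is S'-below that of B, and A
   otherwise, so that vertex k is S'-eligible at step k.  Then 0, 1, ..., n+1 is an
   S'-ordering, but not an S-ordering: when vertex n is numbered its label A is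
   S-below the label B of vertex n+1. *)

From mathcomp Require Import all_boot finmap.

Set Implicit Arguments.
Unset Strict Implicit.
Unset Printing Implicit Defensive.

Section TBLSOrderings.

Variables (T : finType) (prec : rel pfset) (e : rel T).

Definition eligible_steps (s : seq T) : Prop :=
  forall p v q, s = p ++ v :: q -> eligible prec e p v.

Lemma eligible_notin s x : eligible prec e s x -> x \notin s.
Proof. by case/andP. Qed.

Lemma tbls_next_eligible tau s v :
  tbls_next prec e tau s = Some v -> eligible prec e s v.
Proof.
rewrite /tbls_next => next_v.
have : v \in [seq x <- tau | eligible prec e s x].
  by case: [seq x <- tau | _] next_v => //= w l [->]; rewrite inE eqxx.
by rewrite mem_filter => /andP[].
Qed.

Lemma tbls_next_exists tau s x :
  x \in tau -> eligible prec e s x -> exists v, tbls_next prec e tau s = Some v.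
Proof.
move=> x_tau x_el; rewrite /tbls_next.
have : x \in [seq y <- tau | eligible prec e s y] by rewrite mem_filter x_el.
by case: [seq y <- tau | _] => // v l _; exists v.
Qed.

Lemma tbls_next_cat p v q :
  eligible prec e p v -> tbls_next prec e (p ++ v :: q) p = Some v.
Proof.
move=> v_el; rewrite /tbls_next filter_cat /= v_el (@eq_in_filter _ _ pred0) ?filter_pred0 //.
by move=> x x_p; apply/negbTE; apply: contraL x_p; apply: eligible_notin.
Qed.

Lemma tbls_iter_eligible_steps s : eligible_steps s ->
  forall k p r, k <= size r -> s = p ++ r -> tbls_iter prec e s k p = p ++ take k r.
Proof.
move=> s_el; elim=> [|k IHk] p [|v r] //= k_le s_eq; rewrite ?take0 ?cats0 //.
rewrite s_eq tbls_next_cat -?s_eq; last exact: s_el s_eq.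
by rewrite (IHk _ r) // -?cats1 -?catA.
Qed.

Lemma TBLS_eligible_steps s :
  eligible_steps s -> size s = #|T| -> TBLS prec e s = s.
Proof.
move=> s_el size_s; rewrite /TBLS (tbls_iter_eligible_steps s_el (r := s)) ?size_s //.
by rewrite take_oversize ?size_s.
Qed.

Lemma eligible_steps_TBLS tau : eligible_steps (TBLS prec e tau).
Proof.
suff iter_el k s : eligible_steps s -> eligible_steps (tbls_iter prec e tau k s).
  by apply: iter_el => p v q /(congr1 size); rewrite size_cat /= addnS.
elim: k s => [|k IHk] s s_el //=.
case next_v: tbls_next => [v|] //; apply: IHk => p w q.
case/lastP: q => [|q z]; first by rewrite cats1 => /rcons_inj[<- <-]; exact: tbls_next_eligible next_v.
by rewrite -rcons_cons -rcons_cat => /rcons_inj[/s_el].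
Qed.

Lemma is_ordering_mem tau : is_ordering tau -> tau =i T.
Proof.
case/andP=> uniq_tau /eqP size_tau y.
have size_enum : size (enum T) <= size tau by rewrite -cardE size_tau.
have [_ ->] := uniq_min_size uniq_tau (fun z _ => mem_enum T z) size_enum.
by rewrite mem_enum.
Qed.

Hypothesis prec_po : strict_po prec.

(* A vertex beaten by the fewest unnumbered vertices is beaten by none, by transitivity. *)
Lemma exists_eligible s y : y \notin s -> exists x, eligible prec e s x.
Proof.
case: prec_po => prec_irr prec_tr y_s.
pose beaten x := #|[set z | (z \notin s) && prec (lab e s x) (lab e s z)]|.
case: (@arg_minnP _ y (fun x => x \notin s) beaten y_s) => x x_s x_min; exists x.
rewrite /eligible x_s; apply/forallP => z; apply/implyP => z_s; apply/negP => xz.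
have := x_min z z_s; apply/negP; rewrite -ltnNge; apply: proper_card; apply/properP; split.
  by apply/subsetP => w; rewrite !inE => /andP[-> /(prec_tr _ _ _ xz)].
by exists z; rewrite !inE ?z_s ?xz ?prec_irr.
Qed.

Lemma tbls_iter_is_ordering tau k s : is_ordering tau -> uniq s ->
  (size s + k)%N = #|T| -> is_ordering (tbls_iter prec e tau k s).
Proof.
move=> tau_ord; elim: k s => [|k IHk] s uniq_s size_s /=.
  by rewrite /is_ordering uniq_s -size_s addn0 eqxx.
have [y y_s] : exists y, y \notin s.
  apply/existsP; rewrite -negb_forall; apply/negP => /forallP s_full.
  have := uniq_leq_size (enum_uniq T) (fun z _ => s_full z).
  by rewrite -cardE -size_s addnS ltnNge leq_addr.
have [x x_el] := exists_eligible y_s.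
have [v next_v] := tbls_next_exists (is_ordering_mem tau_ord x) x_el.
rewrite next_v; apply: IHk; last by rewrite size_rcons addSnnS.
by rewrite rcons_uniq uniq_s eligible_notin ?(tbls_next_eligible next_v).
Qed.

Lemma S_orderingP sigma :
  S_ordering prec e sigma <-> is_ordering sigma /\ eligible_steps sigma.
Proof.
split=> [[tau [tau_ord ->]]|[sigma_ord sigma_el]].
  by split; [apply: tbls_iter_is_ordering | apply: eligible_steps_TBLS].
exists sigma; split=> //; apply/esym/TBLS_eligible_steps => //.
by case/andP: sigma_ord => _ /eqP.
Qed.

End TBLSOrderings.

Lemma eligible_subrel (T : finType) (prec prec' : rel pfset) (e : rel T) s x :
  subrel prec prec' -> eligible prec' e s x -> eligible prec e s x.
Proof.
move=> sub /andP[x_s /forallP x_max]; rewrite /eligible x_s.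
apply/forallP => y; apply/implyP => y_s.
exact: contra (sub _ _) (implyP (x_max y) y_s).
Qed.

Lemma pf_trunc_subproof (X : pfset) k : 0 \notin [fset x in sval X | x <= k].
Proof. by rewrite !inE (negbTE (svalP X)). Qed.

Definition pf_trunc (X : pfset) (k : nat) : pfset :=
  exist _ [fset x in sval X | x <= k] (pf_trunc_subproof X k).

Lemma pf_trunc_id (X : pfset) k : {in sval X, forall x, x <= k} -> pf_trunc X k = X.
Proof.
move=> X_le; apply: val_inj; apply/fsetP => x /=; rewrite !inE.
by case: (boolP (x \in sval X)) => //= /X_le.
Qed.

Lemma enum_ord_cat_cons N (p : seq 'I_N) v q : enum 'I_N = p ++ v :: q ->
  map val p = iota 0 (size p) /\ val v = size p.
Proof.
move=> enum_N; have := val_enum_ord N; rewrite enum_N map_cat /=.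
have lt_p : size p < N.
  have := size_enum_ord N; rewrite enum_N size_cat /= => /eq_leq; apply: leq_trans.
  by rewrite -[X in X < _]addn0 ltn_add2l.
have -> : iota 0 N = iota 0 (size p) ++ size p :: iota (size p).+1 (N - (size p).+1).
  by rewrite -[in LHS](subnKC (ltnW lt_p)) iotaD -subnSK.
by move/eqP; rewrite eqseq_cat ?size_map ?size_iota // => /andP[/eqP-> /eqP[->]].
Qed.

Lemma mem_ord_prefix N (p : seq 'I_N) y :
  map val p = iota 0 (size p) -> (y \in p) = (val y < size p).
Proof.
by move=> val_p; rewrite -(mem_map val_inj) val_p mem_iota.
Qed.

Section Gadget.

Variables (prec : rel pfset) (A B : pfset) (n : nat).

(* Vertex [k] is numbered [k.+1] by the ordering [0, 1, ..., n.+1]; its earlier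
   neighbours are the [j < k] with [j.+1 \in gadget_nbhd k]. *)
Definition gadget_nbhd (k : nat) : pfset :=
  if k < n then (if prec (pf_trunc A k) (pf_trunc B k) then B else A)
  else if k == n then A else B.

Definition gadget_edge (u v : 'I_n.+2) : bool :=
  (u < v) && (u.+1 \in sval (gadget_nbhd v)) || (v < u) && (v.+1 \in sval (gadget_nbhd u)).

Lemma gadget_simple : simple_graph gadget_edge.
Proof. by split=> [u v | u]; rewrite /gadget_edge; [rewrite orbC | rewrite ltnn]. Qed.

Lemma mem_gadget_nbhd k : gadget_nbhd k \in [:: A; B].
Proof. by rewrite /gadget_nbhd !inE; case: ifP; [case: ifP | case: ifP]; rewrite eqxx ?orbT. Qed.

Lemma lab_gadget (p : seq 'I_n.+2) (x : 'I_n.+2) :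
  map val p = iota 0 (size p) -> size p <= x ->
  lab gadget_edge p x = pf_trunc (gadget_nbhd x) (size p).
Proof.
move=> val_p p_le_x.
have edge_nth j : j < size p -> gadget_edge (nth x p j) x = (j.+1 \in sval (gadget_nbhd x)).
  move=> j_lt; have j_lt_x := leq_trans j_lt p_le_x.
  have val_j : val (nth x p j) = j by rewrite -(nth_map x 0) // val_p nth_iota.
  by rewrite /gadget_edge val_j j_lt_x ltnNge (ltnW j_lt_x) orbF.
apply: val_inj; apply/fsetP => i; rewrite /= /lab_raw !inE.
apply/imfsetP/andP => [[j] | [i_nb i_le]].
  by rewrite mem_filter mem_iota add0n => /andP[edge_j j_lt] ->; rewrite -edge_nth.
case: i i_nb i_le => [|j]; first by rewrite (negbTE (svalP (gadget_nbhd x))).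
by exists j => //; rewrite mem_filter mem_iota edge_nth ?i_nb.
Qed.

Hypotheses (truncA : pf_trunc A n = A) (truncB : pf_trunc B n = B).

Lemma gadget_not_eligible_steps (precS : rel pfset) :
  precS A B -> ~ eligible_steps precS gadget_edge (enum 'I_n.+2).
Proof.
set s := enum 'I_n.+2 => AB steps.
have n_lt : n < size s by rewrite size_enum_ord.
have s_split : s = take n s ++ nth ord0 s n :: drop n.+1 s by rewrite -drop_nth // cat_take_drop.
have [val_p val_v] := enum_ord_cat_cons s_split.
have size_p : size (take n s) = n := size_takel (ltnW n_lt).
rewrite size_p in val_v; have /andP[_ /forallP/(_ ord_max)] := steps _ _ _ s_split.
rewrite mem_ord_prefix // size_p ltnNge leqnSn /= !lab_gadget // size_p ?val_v //=.
by rewrite /gadget_nbhd ltnn eqxx ltnNge leqnSn gtn_eqF // truncA truncB AB.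
Qed.

Hypotheses (prec_po : strict_po prec) (not_prec_AB : ~~ prec A B).

Lemma gadget_nbhd_minimal k X : k <= n -> X \in [:: A; B] ->
  ~~ prec (pf_trunc (gadget_nbhd k) k) (pf_trunc X k).
Proof.
case: prec_po => irr tr; rewrite !inE leq_eqVlt => /predU1P[-> | lt_kn].
  by rewrite /gadget_nbhd ltnn eqxx truncA => /predU1P[-> | /eqP->]; rewrite ?truncA ?truncB ?irr.
rewrite /gadget_nbhd lt_kn; case: ifP => AB_k /predU1P[-> | /eqP->]; rewrite ?irr ?AB_k //.
by apply/negP => /(tr _ _ _ AB_k); rewrite irr.
Qed.

Lemma eligible_steps_gadget : eligible_steps prec gadget_edge (enum 'I_n.+2).
Proof.
move=> p v q s_split; have [val_p val_v] := enum_ord_cat_cons s_split.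
rewrite /eligible mem_ord_prefix // val_v ltnn; apply/forallP => y; apply/implyP.
rewrite mem_ord_prefix // -leqNgt => p_le_y.
have [-> | neq_yv] := eqVneq y v; first by case: prec_po => irr _; rewrite irr.
have lt_vy : val v < val y by rewrite ltn_neqAle val_v p_le_y andbT -val_v val_eqE eq_sym.
rewrite !lab_gadget ?val_v // gadget_nbhd_minimal ?mem_gadget_nbhd //.
by rewrite -val_v -ltnS (leq_trans lt_vy) // -ltnS ltn_ord.
Qed.

End Gadget.

Theorem theorem1 (precS precS' : rel pfset) :
  strict_po precS -> strict_po precS' ->
  ((forall (T : finType) (e : rel T), simple_graph e ->
      forall sigma : seq T, S_ordering precS' e sigma -> S_ordering precS e sigma)
   <->
   (forall A B : pfset, precS A B -> precS' A B)).
Proof.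
move=> S_po S'_po; split=> [orderings_incl A B AB | prec_incl T e _ sigma].
  apply/negPn/negP => not_AB'.
  pose n := \max_(x <- sval A `|` sval B) x.
  have trunc_n X : X \in [:: A; B] -> pf_trunc X n = X.
    rewrite !inE => X_AB; apply: pf_trunc_id => x x_X.
    by apply: leq_bigmax_seq; rewrite // inE; case/predU1P: X_AB => [<- | /eqP <-]; rewrite x_X ?orbT.
  have truncA := trunc_n A (mem_head _ _); have truncB := trunc_n B (mem_last A [:: B]).
  have sigma_S' : S_ordering precS' (@gadget_edge precS' A B n) (enum 'I_n.+2).
    apply/S_orderingP => //; split; first by rewrite /is_ordering enum_uniq size_enum_ord card_ord eqxx.
    exact: eligible_steps_gadget.
  have /S_orderingP[] // := orderings_incl _ _ (gadget_simple precS' A B n) _ sigma_S'.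
  by move=> _; apply: gadget_not_eligible_steps AB.
rewrite !S_orderingP // => -[sigma_ord sigma_steps]; split=> // p v q /sigma_steps.
exact: eligible_subrel.
Qed.
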